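(* Let $n\ge2$ and $(x_1,\dots,x_n)\in\mathbb R^n$ with $-1<x_1\le x_2\le\dots\le x_n$ and $\sum_{i=1}^nx_i=0$. Then $$\prod_{i=1}^n(1+x_i)\le1-\frac{n}{2(n-1)}x_1^2\le1-\frac{\sum_{i=1}^nx_i^2}{2(n-1)^2}.$$ *)

From Stdlib Require Import Reals.
Open Scope R_scope.

(* Finite sum / product over indices 0 .. n-1 (a vector of R^n is encoded
   as x : nat -> R, with x i = x_{i+1} for i < n). *)
Fixpoint sumR (n : nat) (f : nat -> R) : R :=
  match n with O => 0 | S m => sumR m f + f m end.
Fixpoint prodR (n : nat) (f : nat -> R) : R :=
  match n with O => 1 | S m => prodR m f * f m end.

From Stdlib Require Import Reals Lra Lia Psatz.
Open Scope R_scope.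

(* Let a = x_0 be the smallest coordinate, m = n - 1, and recall a <= 0.

   First inequality.  Split off the factor 1 + a.  The remaining m factors
   1 + x_i are nonnegative with sum m - a, so by AM-GM their product is at
   most u^m with u = 1 - a/m >= 1.  Writing a = m(1 - u), the claim becomes
   the one-variable polynomial inequality
       m u^(m+1) - (m+1) u^m + 1 >= m(m+1)/2 (u - 1)^2     (u >= 1),
   proved by induction on m.

   Second inequality.  The shifted values y_i = x_i - a are nonnegative with
   sum -n a, so sum y_i^2 <= (sum y_i)^2 = n^2 a^2, which expands to
   sum x_i^2 <= n (n - 1) a^2. *)

Lemma sumR_shift (n : nat) (f : nat -> R) :
  sumR (S n) f = f 0%nat + sumR n (fun i => f (S i)).
Proof.
  induction n as [|n IH]; [simpl; ring|].
  change (sumR (S (S n)) f) with (sumR (S n) f + f (S n)).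
  rewrite IH; simpl; ring.
Qed.

Lemma prodR_shift (n : nat) (f : nat -> R) :
  prodR (S n) f = f 0%nat * prodR n (fun i => f (S i)).
Proof.
  induction n as [|n IH]; [simpl; ring|].
  change (prodR (S (S n)) f) with (prodR (S n) f * f (S n)).
  rewrite IH; simpl; ring.
Qed.

Lemma sumR_ext (n : nat) (f g : nat -> R) :
  (forall i, (i < n)%nat -> f i = g i) -> sumR n f = sumR n g.
Proof.
  induction n as [|n IH]; intros Hfg; simpl; [reflexivity|].
  rewrite IH by (intros; apply Hfg; lia).
  rewrite Hfg by lia; reflexivity.
Qed.

Lemma sumR_add (n : nat) (f g : nat -> R) :
  sumR n (fun i => f i + g i) = sumR n f + sumR n g.
Proof. induction n as [|n IH]; simpl; [ring | rewrite IH; ring]. Qed.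

Lemma sumR_scal (n : nat) (c : R) (f : nat -> R) :
  sumR n (fun i => c * f i) = c * sumR n f.
Proof. induction n as [|n IH]; simpl; [ring | rewrite IH; ring]. Qed.

Lemma sumR_const (n : nat) (c : R) : sumR n (fun _ => c) = INR n * c.
Proof. induction n as [|n IH]; cbn [sumR]; [simpl; ring | rewrite IH, S_INR; ring]. Qed.

Lemma sumR_ge (n : nat) (f : nat -> R) (c : R) :
  (forall i, (i < n)%nat -> c <= f i) -> INR n * c <= sumR n f.
Proof.
  induction n as [|n IH]; intros Hc; cbn [sumR]; [simpl; lra|].
  rewrite S_INR.
  assert (IHc : INR n * c <= sumR n f) by (apply IH; intros; apply Hc; lia).
  assert (Hn : c <= f n) by (apply Hc; lia).
  lra.
Qed.

Lemma sumR_nonneg (n : nat) (f : nat -> R) :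
  (forall i, (i < n)%nat -> 0 <= f i) -> 0 <= sumR n f.
Proof. intros H. pose proof (sumR_ge n f 0 H). lra. Qed.

Lemma sumR_sq_le_sq_sumR (n : nat) (y : nat -> R) :
  (forall i, (i < n)%nat -> 0 <= y i) ->
  sumR n (fun i => y i ^ 2) <= (sumR n y) ^ 2.
Proof.
  induction n as [|n IH]; intros Hy; cbn [sumR]; [simpl; lra|].
  assert (IHy : sumR n (fun i => y i ^ 2) <= (sumR n y) ^ 2)
    by (apply IH; intros; apply Hy; lia).
  assert (Hyn : 0 <= y n) by (apply Hy; lia).
  assert (Hs : 0 <= sumR n y) by (apply sumR_nonneg; intros; apply Hy; lia).
  nra.
Qed.

(* Two-point AM-GM step: for A, B >= 0,
   A^j ((j+1) B - j A) <= B^(j+1)  (tangent line of t |-> t^(j+1) at A). *)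
Lemma pow_tangent_le (j : nat) (A B : R) :
  0 <= A -> 0 <= B -> A ^ j * ((INR j + 1) * B - INR j * A) <= B ^ S j.
Proof.
  intros HA HB. induction j as [|j IH]; [simpl; lra|].
  assert (Hstep : B ^ S (S j) - A ^ S j * ((INR (S j) + 1) * B - INR (S j) * A)
    = B * (B ^ S j - A ^ j * ((INR j + 1) * B - INR j * A))
      + (INR j + 1) * A ^ j * (B - A) ^ 2)
    by (rewrite S_INR; simpl; ring).
  assert (Hsq : 0 <= (INR j + 1) * A ^ j * (B - A) ^ 2).
  { pose proof (pos_INR j). pose proof (pow_le A j HA). pose proof (pow2_ge_0 (B - A)).
    apply Rmult_le_pos; [apply Rmult_le_pos|]; lra. }
  assert (Hrec : 0 <= B * (B ^ S j - A ^ j * ((INR j + 1) * B - INR j * A)))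
    by (apply Rmult_le_pos; lra).
  lra.
Qed.

Lemma amgm (k : nat) (y : nat -> R) :
  (forall i, (i < S k)%nat -> 0 <= y i) ->
  prodR (S k) y <= (sumR (S k) y / INR (S k)) ^ S k.
Proof.
  induction k as [|k IH]; intros Hy.
  - simpl. replace (0 + y 0%nat) with (y 0%nat) by ring. lra.
  - change (prodR (S (S k)) y) with (prodR (S k) y * y (S k)).
    change (sumR (S (S k)) y) with (sumR (S k) y + y (S k)).
    assert (IHy : prodR (S k) y <= (sumR (S k) y / INR (S k)) ^ S k)
      by (apply IH; intros; apply Hy; lia).
    assert (Hz : 0 <= y (S k)) by (apply Hy; lia).
    assert (Hs : 0 <= sumR (S k) y) by (apply sumR_nonneg; intros; apply Hy; lia).
    assert (HK : 0 < INR (S k)) by (apply lt_0_INR; lia).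
    rewrite (S_INR (S k)).
    set (s := sumR (S k) y) in *. set (z := y (S k)) in *. set (K := INR (S k)) in *.
    assert (Hmean : 0 <= s / K) by (apply Rle_mult_inv_pos; lra).
    assert (Hmean' : 0 <= (s + z) / (K + 1)) by (apply Rle_mult_inv_pos; lra).
    pose proof (pow_tangent_le (S k) _ _ Hmean Hmean') as Htan. fold K in Htan.
    replace ((K + 1) * ((s + z) / (K + 1)) - K * (s / K)) with z in Htan
      by (field; lra).
    apply Rle_trans with ((s / K) ^ S k * z); [apply Rmult_le_compat_r; lra | exact Htan].
Qed.

Lemma pow_gap_ge (m : nat) (u : R) :
  1 <= u ->
  INR m * u ^ S m - (INR m + 1) * u ^ m + 1 >= INR m * (INR m + 1) / 2 * (u - 1) ^ 2.
Proof.
  intros Hu. induction m as [|m IH]; [simpl; lra|].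
  assert (Hum : 1 <= u ^ m) by (apply pow_R1_Rle; lra).
  assert (Hstep : INR (S m) * u ^ S (S m) - (INR (S m) + 1) * u ^ S m + 1
    = (INR m * u ^ S m - (INR m + 1) * u ^ m + 1) + (INR m + 1) * u ^ m * (u - 1) ^ 2)
    by (rewrite S_INR; simpl; ring).
  rewrite Hstep, S_INR.
  assert (Hnew : 0 <= (INR m + 1) * (u ^ m - 1) * (u - 1) ^ 2).
  { pose proof (pos_INR m). pose proof (pow2_ge_0 (u - 1)).
    apply Rmult_le_pos; [apply Rmult_le_pos|]; lra. }
  nra.
Qed.

(* The scalar form of the first inequality: the factor 1 + a times the
   AM-GM bound for the other m factors. *)
Lemma head_factor_bound (m : nat) (a : R) :
  (1 <= m)%nat -> -1 <= a <= 0 ->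
  (1 + a) * (1 - a / INR m) ^ m <= 1 - (INR m + 1) / (2 * INR m) * a ^ 2.
Proof.
  intros Hm Ha.
  assert (HM : 1 <= INR m) by (apply (le_INR 1) in Hm; simpl in Hm; lra).
  set (M := INR m) in *. set (u := 1 - a / M).
  assert (Hu : 1 <= u).
  { unfold u. assert (0 <= - a / M) by (apply Rle_mult_inv_pos; lra).
    replace (1 - a / M) with (1 + - a / M) by (field; lra). lra. }
  assert (Hau : a = M * (1 - u)) by (unfold u; field; lra).
  pose proof (pow_gap_ge m u Hu) as Hgap. fold M in Hgap.
  change (u ^ S m) with (u * u ^ m) in Hgap.
  replace ((M + 1) / (2 * M) * a ^ 2) with (M * (M + 1) / 2 * (u - 1) ^ 2)
    by (rewrite Hau; field; lra).
  rewrite Hau. nra.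
Qed.

Lemma sorted_head_min (n : nat) (x : nat -> R) :
  (forall i, (S i < n)%nat -> x i <= x (S i)) ->
  forall i, (i < n)%nat -> x 0%nat <= x i.
Proof.
  intros Hsorted i. induction i as [|i IH]; intros Hi; [lra|].
  pose proof (Hsorted i Hi). pose proof (IH ltac:(lia)). lra.
Qed.

Lemma lower_bound_nonpos (n : nat) (x : nat -> R) (a : R) :
  (0 < n)%nat -> (forall i, (i < n)%nat -> a <= x i) -> sumR n x = 0 -> a <= 0.
Proof.
  intros Hn Hmin Hsum.
  pose proof (sumR_ge n x a Hmin) as Hge. pose proof (lt_0_INR n Hn).
  rewrite Hsum in Hge. nra.
Qed.

Lemma prod_one_plus_le (n : nat) (x : nat -> R) :
  (2 <= n)%nat -> -1 < x 0%nat ->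
  (forall i, (i < n)%nat -> x 0%nat <= x i) -> sumR n x = 0 ->
  prodR n (fun i => 1 + x i) <= 1 - INR n / (2 * (INR n - 1)) * x 0%nat ^ 2.
Proof.
  intros Hn Hgt Hmin Hsum.
  assert (Ha : x 0%nat <= 0) by (apply (lower_bound_nonpos n x); auto; lia).
  destruct n as [|m]; [lia|].
  rewrite prodR_shift. rewrite sumR_shift in Hsum.
  set (a := x 0%nat) in *.
  destruct m as [|k]; [lia|].
  set (y := fun i => 1 + x (S i)).
  assert (Hy : forall i, (i < S k)%nat -> 0 <= y i)
    by (intros i Hi; unfold y; pose proof (Hmin (S i) ltac:(lia)); lra).
  assert (Hmean : sumR (S k) y / INR (S k) = 1 - a / INR (S k)).
  { assert (Htail : sumR (S k) (fun i => x (S i)) = - a) by lra.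
    assert (0 < INR (S k)) by (apply lt_0_INR; lia).
    unfold y. rewrite sumR_add, sumR_const, Htail. field; lra. }
  pose proof (amgm k y Hy) as Hamgm. rewrite Hmean in Hamgm.
  replace (INR (S (S k)) / (2 * (INR (S (S k)) - 1)))
    with ((INR (S k) + 1) / (2 * INR (S k))) by (rewrite (S_INR (S k)); f_equal; ring).
  eapply Rle_trans; [apply Rmult_le_compat_l; [lra | exact Hamgm]|].
  apply head_factor_bound; [lia | lra].
Qed.

Lemma sum_sq_le_min_sq (n : nat) (x : nat -> R) (a : R) :
  (forall i, (i < n)%nat -> a <= x i) -> sumR n x = 0 ->
  sumR n (fun i => x i ^ 2) <= INR n * (INR n - 1) * a ^ 2.
Proof.
  intros Hmin Hsum.
  set (y := fun i => x i - a).
  assert (Hy : forall i, (i < n)%nat -> 0 <= y i)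
    by (intros i Hi; unfold y; pose proof (Hmin i Hi); lra).
  assert (Hsumy : sumR n y = - INR n * a).
  { unfold y. unfold Rminus. rewrite sumR_add, sumR_const, Hsum. ring. }
  assert (Hexpand : sumR n (fun i => x i ^ 2)
                    = sumR n (fun i => y i ^ 2) + 2 * a * sumR n y + INR n * a ^ 2).
  { rewrite <- sumR_scal, <- sumR_const, <- !sumR_add.
    apply sumR_ext; intros i _; unfold y; ring. }
  pose proof (sumR_sq_le_sq_sumR n y Hy) as Hsq.
  rewrite Hexpand. rewrite Hsumy in Hsq |- *. nra.
Qed.

Theorem lemmaA2 (n : nat) (x : nat -> R) :
  (2 <= n)%nat ->
  -1 < x 0%nat ->
  (forall i : nat, (S i < n)%nat -> x i <= x (S i)) ->
  sumR n x = 0 ->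
  prodR n (fun i => 1 + x i) <= 1 - INR n / (2 * (INR n - 1)) * (x 0%nat) ^ 2
  /\ 1 - INR n / (2 * (INR n - 1)) * (x 0%nat) ^ 2
     <= 1 - sumR n (fun i => (x i) ^ 2) / (2 * (INR n - 1) ^ 2).
Proof.
  intros Hn Hgt Hsorted Hsum.
  pose proof (sorted_head_min n x Hsorted) as Hmin.
  split; [apply prod_one_plus_le; assumption|].
  pose proof (sum_sq_le_min_sq n x (x 0%nat) Hmin Hsum) as Hsq.
  assert (HN : 2 <= INR n) by (apply (le_INR 2) in Hn; simpl in Hn; lra).
  set (N := INR n) in *.
  replace (N / (2 * (N - 1)) * x 0%nat ^ 2)
    with (N * (N - 1) * x 0%nat ^ 2 / (2 * (N - 1) ^ 2)) by (field; lra).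
  assert (Hden : 0 < 2 * (N - 1) ^ 2) by nra.
  apply Rplus_le_compat_l, Ropp_le_contravar.
  apply Rmult_le_compat_r; [apply Rlt_le, Rinv_0_lt_compat; lra | exact Hsq].
Qed.
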